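(* Consider the following two-player Bayesian contest. Fix real $a\neq0$, $b>0$, $c>0$. Each player's private cost type is drawn independently from a common distribution $F$ with support $[\alpha,\beta]\subset(0,c)$ and nondegenerate variance. Let $M_1=E[\theta]$, $M_2=E[\theta^2]$, $\Delta=c-M_1$, $\sigma_\theta^2=M_2-M_1^2>0$, $\kappa=b/a$, $\omega=\sigma_\theta^2/a^2$, $\zeta=\frac{b^2-a\Delta}{a^2}$. In the affine relaxation, actions are arbitrary real numbers and a type-$\theta$ player who chooses $\tilde x\in\mathbb R$ against an opponent using strategy $x(\cdot)$ receives interim utility $\int_\alpha^\beta\bigl[P(\tilde x,x(\theta_y))-\theta\tilde x\bigr]\,dF(\theta_y)$, where $P(x,y)=\tfrac12+(x-y)\bigl(c-b(x+y)+axy\bigr)$ (no truncation). Then the affine relaxation has a unique symmetric Bayesian Nash equilibrium; it is affine and strictly decreasing in type, and expected effort equals $$E[x]=\kappa-\frac{\operatorname{sgn}(a)}{\sqrt2}\sqrt{\zeta+\sqrt{\zeta^2+\omega}}.$$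
   Context: A symmetric Bayesian Nash equilibrium is a strategy $x:[\alpha,\beta]\to\mathbb R$ (with finite first and second moments under $F$) such that, when the opponent uses $x(\cdot)$, $x(\theta)$ maximizes interim utility for every type $\theta$. *)

From mathcomp Require Import all_boot all_order all_algebra.
From mathcomp Require Import all_classical all_reals all_analysis.
Set Implicit Arguments. Unset Strict Implicit. Unset Printing Implicit Defensive.
Import Order.TTheory GRing.Theory Num.Theory.
Import numFieldNormedType.Exports.
Local Open Scope classical_set_scope.
Local Open Scope ring_scope.

Definition contest_payoff {R : realType} (a b c x y : R) : R :=
  1 / 2 + (x - y) * (c - b * (x + y) + a * x * y).

Definition measure_support {R : realType} (F : probability R R) : set R :=
  [set t | forall e : R, 0 < e -> (0 < F (ball t e))%E].

Definition interim_utility {R : realType} (F : probability R R)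
  (a b c alpha beta : R) (x : R -> R) (theta xt : R) : \bar R :=
  (\int[F]_(ty in [set` `[alpha, beta]]) (contest_payoff a b c xt (x ty) - theta * xt)%:E)%E.

Definition symmetric_BNE {R : realType} (F : probability R R)
  (a b c alpha beta : R) (x : R -> R) : Prop :=
  [/\ measurable_fun [set` `[alpha, beta]] x,
      F.-integrable [set` `[alpha, beta]] (fun t => (x t)%:E),
      F.-integrable [set` `[alpha, beta]] (fun t => (x t ^+ 2)%:E) &
      forall theta, alpha <= theta <= beta -> forall xt : R,
        (interim_utility F a b c alpha beta x theta xt
          <= interim_utility F a b c alpha beta x theta (x theta))%E].

From mathcomp Require Import all_boot all_order all_algebra.
From mathcomp Require Import all_classical all_reals all_analysis.
From mathcomp Require Import ring lra.
Set Implicit Arguments.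
Unset Strict Implicit.
Unset Printing Implicit Defensive.
Import Order.TTheory GRing.Theory Num.Theory.
Import numFieldNormedType.Exports.
Local Open Scope classical_set_scope.
Local Open Scope ring_scope.

(* Against an opponent strategy y with moments m1 = E[y] and m2 = E[y^2], the
   interim utility of type theta playing z is, up to a constant,
   z (c - theta - a m2) - z^2 u  with  u = b - a m1.  Since the linear
   coefficient depends on theta, a best response for every type forces u > 0,
   and then y theta = (c - theta - a m2) / (2u): every equilibrium is affine
   with slope -1/(2u) and mean (b - u)/a.  Such a strategy is a best response
   to itself iff u solves 4 v^2 - 4 v zeta - omega = 0 with v = u^2/a^2; as
   omega > 0 this quadratic has exactly one positive root, which determines u,
   hence the equilibrium and its mean E[x] = (b - u)/a. *)

Section quadratic_facts.
Context {R : rcfType}.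

Lemma quadratic_argmaxP (A L y : R) : 0 < A ->
  (forall z, z * L - z ^+ 2 * A <= y * L - y ^+ 2 * A) <-> y = L / (2 * A).
Proof.
move=> A_gt0; have A_neq0 : A != 0 by rewrite gt_eqF.
have gap z : L / (2 * A) * L - (L / (2 * A)) ^+ 2 * A - (z * L - z ^+ 2 * A) =
    A * (z - L / (2 * A)) ^+ 2 by field.
split => [ymax|-> z].
  have : A * (y - L / (2 * A)) ^+ 2 <= 0.
    by rewrite -gap; have := ymax (L / (2 * A)); lra.
  by rewrite pmulr_rle0 // leNgt lt_def sqr_ge0 sqrf_eq0 subr_eq0 andbT negbK => /eqP.
by have := gap z; have := mulr_ge0 (ltW A_gt0) (sqr_ge0 (z - L / (2 * A))); lra.
Qed.

Lemma quadratic_max_lin_eq0 (A L y : R) : A <= 0 ->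
  (forall z, z * L - z ^+ 2 * A <= y * L - y ^+ 2 * A) -> L = 0.
Proof.
move=> A_le0 ymax; apply/eqP/negPn/negP => L_neq0.
pose K := `|y * L - y ^+ 2 * A| + 1.
have := ymax (K / L); rewrite mulfVK //.
have : 0 <= - ((K / L) ^+ 2 * A) by rewrite oppr_ge0 mulr_ge0_le0 // sqr_ge0.
by have := ler_norm (y * L - y ^+ 2 * A); rewrite /K; lra.
Qed.

Lemma normr_lt_sqrt_sqrD (Z C : R) : 0 < C -> `|Z| < Num.sqrt (Z ^+ 2 + C).
Proof. by move=> C_gt0; rewrite -sqrtr_sqr ltr_sqrt; [lra | have := sqr_ge0 Z; lra]. Qed.

Lemma quadratic_pos_root_gt0 (Z C : R) :
  0 < C -> 0 < (Z + Num.sqrt (Z ^+ 2 + C)) / 2.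
Proof. by move=> /(normr_lt_sqrt_sqrD Z); have := ler_norm (- Z); rewrite normrN; lra. Qed.

Lemma quadratic_pos_rootP (Z C w : R) : 0 < C -> 0 < w ->
  4 * w ^+ 2 - 4 * w * Z - C = 0 <-> w = (Z + Num.sqrt (Z ^+ 2 + C)) / 2.
Proof.
move=> C_gt0 w_gt0; set s := Num.sqrt _.
have s2 : s ^+ 2 = Z ^+ 2 + C by rewrite sqr_sqrtr // addr_ge0 ?sqr_ge0 ?ltW.
have := normr_lt_sqrt_sqrD Z C_gt0; rewrite -/s => Z_lt_s.
have := ler_norm Z; have := ler_norm (- Z); rewrite normrN => ? ?.
have -> : 4 * w ^+ 2 - 4 * w * Z - C = (2 * w - Z - s) * (2 * w - Z + s).
  by rewrite -subr_sqr s2; ring.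
split => [/eqP|->].
  by rewrite mulf_eq0 => /orP[/eqP|/eqP]; lra.
by rewrite (_ : 2 * _ - Z - s = 0) ?mul0r //; lra.
Qed.

End quadratic_facts.

Lemma self_best_response_quadratic {R : numFieldType} (a b Delta s u : R) :
    a != 0 -> u != 0 ->
  2 * u * ((b - u) / a) + a * (((b - u) / a) ^+ 2 + s / (2 * u) ^+ 2) = Delta <->
  4 * (u ^+ 2 / a ^+ 2) ^+ 2 - 4 * (u ^+ 2 / a ^+ 2) * ((b ^+ 2 - a * Delta) / a ^+ 2)
    - s / a ^+ 2 = 0.
Proof.
move=> a_neq0 u_neq0.
have k_neq0 : a ^+ 3 / (4 * u ^+ 2) != 0.
  by rewrite mulf_neq0 ?invr_eq0 ?mulf_neq0 ?expf_neq0 ?pnatr_eq0.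
have E : 2 * u * ((b - u) / a) + a * (((b - u) / a) ^+ 2 + s / (2 * u) ^+ 2) - Delta =
    - (a ^+ 3 / (4 * u ^+ 2)) * (4 * (u ^+ 2 / a ^+ 2) ^+ 2
      - 4 * (u ^+ 2 / a ^+ 2) * ((b ^+ 2 - a * Delta) / a ^+ 2) - s / a ^+ 2).
  by field; rewrite a_neq0 u_neq0.
split => [fixed|root]; apply/eqP.
  by move: E; rewrite fixed subrr => /esym/eqP; rewrite mulf_eq0 oppr_eq0 (negbTE k_neq0).
by rewrite -subr_eq0 E root mulr0.
Qed.

Section null_outside_support.
Context {R : realType} (mu : {measure set R -> \bar R}).

Lemma itv_oo_subset_setU_ball (p t r s e : R) : s - e < t -> r <= s + e ->
  [set` `]p, r[] `<=` [set` `]p, t[] `|` ball s e.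
Proof.
move=> st rs x /=; rewrite !in_itv /= => /andP[px xr].
have [xt|tx] := ltP x t; first by left; rewrite px.
by right; rewrite ball_itv /= in_itv /=; apply/andP; split; lra.
Qed.

Lemma measure_itv_oo_eq0 (p q : R) :
    (forall s, p <= s <= q -> exists2 e : R, 0 < e & mu (ball s e) = 0%E) ->
  mu [set` `]p, q[] = 0%E.
Proof.
move=> locally_null.
have [pq|qp] := leP p q; last by rewrite set_itv_ge ?measure0 // bnd_simp -leNgt ltW.
pose S := [set r | p <= r <= q /\ mu [set` `]p, r[] = 0%E].
have Sp : S p by split; [rewrite lexx pq | rewrite set_itv_ge ?measure0 // bnd_simp ltxx].
have supS : has_sup S by split; [exists p | exists q => r [/andP[]]].
have [ps sq] : p <= sup S /\ sup S <= q.
  by split; [exact: sup_upper_bound | apply: ge_sup => [|r [/andP[]]]; first exists p].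
have [e e_gt0 ball0] := locally_null (sup S) ltac:(by rewrite ps sq).
have [t [_ pt0] et] := sup_adherent e_gt0 supS.
have null_upto r : r <= sup S + e / 2 -> mu [set` `]p, r[] = 0%E.
  move=> rs; have rse : r <= sup S + e by lra.
  have mpt : measurable [set` `]p, t[] by exact: measurable_itv.
  have mball : measurable (ball (sup S) e) by exact: measurable_realfun.measurable_ball.
  apply: (subset_measure0 _ _ (itv_oo_subset_setU_ball (p := p) et rse)).
  - exact: measurable_itv.
  - exact: measurableU.
  - exact: null_set_setU.
have [//|qs] := leP q (sup S + e / 2); first exact: null_upto.
have : S (sup S + e / 2) by split; [apply/andP; split; lra | exact: null_upto].
by move/(sup_upper_bound supS) => ?; exfalso; lra.
Qed.

Lemma exists_nat_invS_lt_ltS (d : R) :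
  0 < d -> exists n : nat, (n.+1%:R : R)^-1 < d < n.+1%:R.
Proof.
move=> d_gt0; exists (Num.truncn (d + d^-1)).
have := truncnS_gt (d + d^-1); set N := (Num.truncn _).+1%:R => dN.
have d'_gt0 : 0 < d^-1 by rewrite invr_gt0.
apply/andP; split; last lra.
by rewrite -[d]invrK ltf_pV2 ?posrE ?invr_gt0 ?ltr0n //; lra.
Qed.

Lemma setC_itv_cc_subset_bigcup (alpha beta : R) :
  ~` [set` `[alpha, beta]] `<=` \bigcup_n
    ([set` `]alpha - n.+1%:R, alpha - n.+1%:R^-1[] `|`
     [set` `]beta + n.+1%:R^-1, beta + n.+1%:R[]).
Proof.
move=> t /negP; rewrite in_itv /= negb_and -!ltNge => /orP[ta|bt].
- have [n /andP[n1 n2]] := @exists_nat_invS_lt_ltS (alpha - t) ltac:(lra).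
  exists n => //; left; rewrite /= in_itv /=.
  by move: n1 n2; set e := n.+1%:R^-1; set N := n.+1%:R => *; apply/andP; split; lra.
- have [n /andP[n1 n2]] := @exists_nat_invS_lt_ltS (t - beta) ltac:(lra).
  exists n => //; right; rewrite /= in_itv /=.
  by move: n1 n2; set e := n.+1%:R^-1; set N := n.+1%:R => *; apply/andP; split; lra.
Qed.

Lemma measure_setC_itv_cc_eq0 (alpha beta : R) :
    (forall s, ~ [set` `[alpha, beta]] s ->
       exists2 e : R, 0 < e & mu (ball s e) = 0%E) ->
  mu (~` [set` `[alpha, beta]]) = 0%E.
Proof.
move=> locally_null.
have null_itv p q : q < alpha \/ beta < p -> mu [set` `]p, q[] = 0%E.
  move=> out; apply: measure_itv_oo_eq0 => s /andP[ps sq]; apply: locally_null.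
  apply/negP; rewrite in_itv /= negb_and -!ltNge.
  by case: out => [qa|bp]; apply/orP; [left|right]; lra.
have mC : measurable (~` [set` `[alpha, beta]]).
  by apply: measurableC; exact: measurable_itv.
apply/(negligibleP mu mC).
apply: negligibleS (setC_itv_cc_subset_bigcup (alpha := alpha) (beta := beta)) _.
apply: negligible_bigcup => n; set e := n.+1%:R^-1.
have e_gt0 : 0 < e by rewrite invr_gt0.
apply/negligibleP; first by apply: measurableU; exact: measurable_itv.
by apply: null_set_setU; try exact: measurable_itv; apply: null_itv; [left|right]; lra.
Qed.

End null_outside_support.

Lemma probability_support_itv {R : realType} (F : probability R R) (alpha beta : R) :
  measure_support F = [set` `[alpha, beta]] -> F [set` `[alpha, beta]] = 1%E.
Proof.
move=> supp; have mD : measurable [set` `[alpha, beta]] by exact: measurable_itv.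
have : F (~` [set` `[alpha, beta]]) = 0%E.
  apply: measure_setC_itv_cc_eq0 => s; rewrite -supp => /existsNP[e /not_implyP[e0 Fe]].
  by exists e => //; apply/eqP; rewrite eq_le measure_ge0 andbT leNgt; exact/negP.
rewrite probability_setC // -[F _]fineK ?fin_num_measure // => /eqP.
by rewrite -EFinB eqe subr_eq0 => /eqP <-.
Qed.

Section quadratic_integral.
Context d (T : measurableType d) (R : realType).
Context (mu : {finite_measure set T -> \bar R}) (D : set T).
Hypothesis mD : measurable D.

Lemma integral_EFin (f : T -> R) : mu.-integrable D (EFin \o f) ->
  (\int[mu]_(x in D) (f x)%:E)%E = (\int[mu]_(x in D) f x)%:E.
Proof. by move=> int_f; rewrite fineK //; exact: integrable_fin_num. Qed.

Lemma integrableDZl (f g : T -> R) (k : R) :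
    mu.-integrable D (EFin \o f) -> mu.-integrable D (EFin \o g) ->
  mu.-integrable D (EFin \o (fun x => f x + k * g x)).
Proof.
move=> int_f int_g.
have -> : EFin \o (fun x => f x + k * g x) = (EFin \o f \+ (fun x => k%:E * (g x)%:E))%E.
  by apply/funext => x /=; rewrite EFinD EFinM.
exact: (integrableD mD int_f (integrableZl mD k int_g)).
Qed.

Lemma RintegralDZl (f g : T -> R) (k : R) :
    mu.-integrable D (EFin \o f) -> mu.-integrable D (EFin \o g) ->
  \int[mu]_(x in D) (f x + k * g x) =
  \int[mu]_(x in D) f x + k * \int[mu]_(x in D) g x.
Proof.
move=> int_f int_g; rewrite RintegralD ?RintegralZl //.
exact: (integrableZl mD k int_g).
Qed.

Lemma integrable_quadratic (f : T -> R) (k0 k1 k2 : R) :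
    mu.-integrable D (EFin \o f) -> mu.-integrable D (EFin \o (fun x => f x ^+ 2)) ->
  mu.-integrable D (EFin \o (fun x => k0 + k1 * f x + k2 * f x ^+ 2)).
Proof.
move=> int_f int_f2; apply: integrableDZl => //.
by apply: integrableDZl => //; exact: finite_measure_integrable_cst.
Qed.

Lemma Rintegral_quadratic (f : T -> R) (k0 k1 k2 : R) :
    mu.-integrable D (EFin \o f) -> mu.-integrable D (EFin \o (fun x => f x ^+ 2)) ->
  \int[mu]_(x in D) (k0 + k1 * f x + k2 * f x ^+ 2) =
  k0 * fine (mu D) + k1 * \int[mu]_(x in D) f x + k2 * \int[mu]_(x in D) f x ^+ 2.
Proof.
have int_k0 := finite_measure_integrable_cst mu k0 mD.
move=> int_f int_f2; rewrite RintegralDZl //; last exact: integrableDZl.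
by rewrite RintegralDZl // Rintegral_cst.
Qed.

End quadratic_integral.

Lemma integrable_exprn {R : realType} (mu : {finite_measure set R -> \bar R})
    (alpha beta : R) (n : nat) :
  mu.-integrable [set` `[alpha, beta]] (EFin \o (fun t => t ^+ n)).
Proof.
have mD : measurable [set` `[alpha, beta]] by exact: measurable_itv.
apply: measurable_bounded_integrable => //.
  by rewrite -ge0_fin_numE ?measure_ge0 ?fin_num_measure.
exists ((`|alpha| + `|beta|) ^+ n); split; first exact: num_real.
move=> M /ltW MB t /=; rewrite in_itv /= => /andP[alt tb].
apply: le_trans MB; rewrite normrX lerXn2r ?nnegrE ?addr_ge0 //.
rewrite ler_norml; have := ler_norm alpha; have := ler_norm beta.
have := ler_norm (- alpha); have := ler_norm (- beta); rewrite !normrN.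
by move=> *; apply/andP; split; lra.
Qed.

Section affine_relaxation.
Context {R : realType} (F : probability R R) (a b c alpha beta : R).
Local Notation D := [set` `[alpha, beta]].
Hypothesis FD : F D = 1%E.
Local Notation M1 := (\int[F]_(t in D) t).
Local Notation M2 := (\int[F]_(t in D) t ^+ 2).
Local Notation sigma2 := (M2 - M1 ^+ 2).
Local Notation zeta := ((b ^+ 2 - a * (c - M1)) / a ^+ 2).
Local Notation omega := (sigma2 / a ^+ 2).
Local Notation U := (interim_utility F a b c alpha beta).

Let mD : measurable D. Proof. exact: measurable_itv. Qed.
Let fFD : fine (F D) = 1. Proof. by rewrite FD. Qed.
Let int_id : F.-integrable D (EFin \o (fun t => t)) := integrable_exprn F alpha beta 1.
Let int_sqr : F.-integrable D (EFin \o (fun t => t ^+ 2)) :=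
  integrable_exprn F alpha beta 2.

Lemma integrable_affine (p q : R) : F.-integrable D (EFin \o (fun t => p + q * t)).
Proof. exact: integrableDZl (finite_measure_integrable_cst F p mD) int_id. Qed.

Lemma integrable_affine_sqr (p q : R) :
  F.-integrable D (EFin \o (fun t => (p + q * t) ^+ 2)).
Proof.
have := integrable_quadratic mD (p ^+ 2) (2 * p * q) (q ^+ 2) int_id int_sqr.
by apply: eq_integrable => // t _ /=; congr EFin; ring.
Qed.

Lemma Rintegral_affine (p q : R) : \int[F]_(t in D) (p + q * t) = p + q * M1.
Proof.
rewrite RintegralDZl //; last exact: finite_measure_integrable_cst.
by rewrite Rintegral_cst // fFD mulr1.
Qed.

Lemma Rintegral_affine_sqr (p q : R) :
  \int[F]_(t in D) (p + q * t) ^+ 2 = (p + q * M1) ^+ 2 + q ^+ 2 * sigma2.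
Proof.
rewrite (@eq_Rintegral _ _ _ F D (fun t => p ^+ 2 + 2 * p * q * t + q ^+ 2 * t ^+ 2));
  last by move=> t _; ring.
by rewrite Rintegral_quadratic // fFD; ring.
Qed.

Lemma itv_lt_of_variance_gt0 : 0 < sigma2 -> alpha < beta.
Proof.
move=> var_gt0; rewrite ltNge; apply/negP => ba.
have Rintegral_at_alpha (f : R -> R) : \int[F]_(t in D) f t = f alpha.
  rewrite (@eq_Rintegral _ _ _ F D (fun=> f alpha)) ?Rintegral_cst // ?fFD ?mulr1 //.
  move=> t; rewrite inE /= in_itv /= => /andP[alt tb].
  by congr f; apply/le_anti; rewrite (le_trans tb ba) alt.
by move: var_gt0; rewrite !Rintegral_at_alpha subrr ltxx.
Qed.

Lemma interim_utilityE (y : R -> R) (theta z : R) :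
    F.-integrable D (EFin \o y) -> F.-integrable D (EFin \o (fun t => y t ^+ 2)) ->
  U y theta z = (1 / 2 - c * \int[F]_(t in D) y t + b * \int[F]_(t in D) y t ^+ 2
    + (z * (c - theta - a * \int[F]_(t in D) y t ^+ 2)
       - z ^+ 2 * (b - a * \int[F]_(t in D) y t)))%:E.
Proof.
move=> int_y int_y2; rewrite /interim_utility.
rewrite (eq_integral (fun t => (1 / 2 + c * z - b * z ^+ 2 - theta * z
    + (a * z ^+ 2 - c) * y t + (b - a * z) * y t ^+ 2)%:E)); last first.
  by move=> t _; rewrite /contest_payoff; congr EFin; ring.
rewrite integral_EFin ?integrable_quadratic // Rintegral_quadratic // fFD.
by congr EFin; ring.
Qed.

Lemma interim_utility_maxP (y : R -> R) (theta : R) :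
    F.-integrable D (EFin \o y) -> F.-integrable D (EFin \o (fun t => y t ^+ 2)) ->
  (forall z, (U y theta z <= U y theta (y theta))%E) <->
  (forall z, z * (c - theta - a * \int[F]_(t in D) y t ^+ 2)
               - z ^+ 2 * (b - a * \int[F]_(t in D) y t)
             <= y theta * (c - theta - a * \int[F]_(t in D) y t ^+ 2)
               - y theta ^+ 2 * (b - a * \int[F]_(t in D) y t)).
Proof.
move=> int_y int_y2; split=> ymax z; have := ymax z;
  by rewrite !interim_utilityE // lee_fin lerD2l.
Qed.

Lemma symmetric_BNE_best_response (y : R -> R) :
    alpha < beta -> symmetric_BNE F a b c alpha beta y ->
  let u := b - a * \int[F]_(t in D) y t in
  0 < u /\ forall theta, alpha <= theta <= beta ->
    y theta = (c - theta - a * \int[F]_(t in D) y t ^+ 2) / (2 * u).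
Proof.
move=> ab [_ int_y int_y2 best] u.
have ymax theta (Dtheta : alpha <= theta <= beta) :=
  (interim_utility_maxP theta int_y int_y2).1 (best theta Dtheta).
have u_gt0 : 0 < u.
  rewrite ltNge; apply/negP => u_le0.
  have Dalpha : alpha <= alpha <= beta by rewrite lexx ltW.
  have Dbeta : alpha <= beta <= beta by rewrite lexx ltW.
  have := quadratic_max_lin_eq0 u_le0 (ymax _ Dalpha).
  have := quadratic_max_lin_eq0 u_le0 (ymax _ Dbeta).
  lra.
by split=> // theta /ymax /(quadratic_argmaxP _ _ u_gt0).
Qed.

(* Mean (b - u)/a and slope -1/(2u); against it the interim utility has
   curvature b - a E[x] = u. *)
Definition affine_response (u t : R) : R := (b - u) / a - (t - M1) / (2 * u).

Lemma affine_responseE (u : R) :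
  affine_response u = (fun t => ((b - u) / a + M1 / (2 * u)) + - (2 * u)^-1 * t).
Proof. by apply/funext => t; rewrite /affine_response; ring. Qed.

Lemma Rintegral_affine_response (u : R) :
  \int[F]_(t in D) affine_response u t = (b - u) / a.
Proof. by rewrite affine_responseE Rintegral_affine; ring. Qed.

Lemma Rintegral_affine_response_sqr (u : R) :
  \int[F]_(t in D) affine_response u t ^+ 2 = ((b - u) / a) ^+ 2 + sigma2 / (2 * u) ^+ 2.
Proof. by rewrite affine_responseE Rintegral_affine_sqr sqrrN exprVn; ring. Qed.

(* The best response to [affine_response u] is [affine_response u] itself. *)
Definition self_best_response (u : R) : Prop :=
  2 * u * ((b - u) / a) + a * (((b - u) / a) ^+ 2 + sigma2 / (2 * u) ^+ 2) = c - M1.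

Definition equilibrium_curvature : R :=
  `|a| * Num.sqrt ((zeta + Num.sqrt (zeta ^+ 2 + omega)) / 2).

Hypotheses (a_neq0 : a != 0) (var_gt0 : 0 < sigma2).

Let a2_gt0 : 0 < a ^+ 2.
Proof. by rewrite exprn_even_gt0 //= a_neq0 orbT. Qed.

Let omega_gt0 : 0 < omega.
Proof. exact: divr_gt0. Qed.

Lemma equilibrium_curvature_gt0 : 0 < equilibrium_curvature.
Proof. by rewrite mulr_gt0 ?normr_gt0 // sqrtr_gt0 quadratic_pos_root_gt0. Qed.

Lemma self_best_responseP (u : R) : 0 < u ->
  self_best_response u <-> u = equilibrium_curvature.
Proof.
move=> u_gt0; have v_gt0 : 0 < u ^+ 2 / a ^+ 2 by rewrite divr_gt0 // exprn_gt0.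
rewrite /self_best_response (self_best_response_quadratic _ _ _ a_neq0 (lt0r_neq0 u_gt0)).
rewrite (quadratic_pos_rootP _ omega_gt0 v_gt0) /equilibrium_curvature.
split => [<-|->].
  rewrite sqrtrM ?sqr_ge0 // sqrtrV ?sqr_ge0 // !sqrtr_sqr (gtr0_norm u_gt0).
  by rewrite mulrC divfK // normr_eq0.
have root_ge0 := ltW (quadratic_pos_root_gt0 zeta omega_gt0).
by rewrite exprMn sqr_sqrtr // real_normK ?num_real //; field.
Qed.

Lemma affine_response_BNE (u : R) : 0 < u -> self_best_response u ->
  symmetric_BNE F a b c alpha beta (affine_response u).
Proof.
move=> u_gt0 fixed.
have int_x : F.-integrable D (EFin \o affine_response u).
  by rewrite affine_responseE; exact: integrable_affine.
have int_x2 : F.-integrable D (EFin \o (fun t => affine_response u t ^+ 2)).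
  by rewrite affine_responseE; exact: integrable_affine_sqr.
split => //.
  by apply/measurable_realfun.measurable_EFinP; exact: measurable_int int_x.
move=> theta _; apply/interim_utility_maxP => //.
rewrite Rintegral_affine_response (_ : b - a * ((b - u) / a) = u); last by field.
apply/(quadratic_argmaxP _ _ u_gt0); rewrite Rintegral_affine_response_sqr.
have -> : c = 2 * u * ((b - u) / a) + a * (((b - u) / a) ^+ 2 + sigma2 / (2 * u) ^+ 2)
              + M1 by rewrite fixed; ring.
by rewrite /affine_response; field; rewrite lt0r_neq0.
Qed.

Lemma symmetric_BNE_affine_response (y : R -> R) :
    alpha < beta -> symmetric_BNE F a b c alpha beta y ->
  let u := b - a * \int[F]_(t in D) y t in
  [/\ 0 < u, self_best_response u &
      forall theta, alpha <= theta <= beta -> y theta = affine_response u theta].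
Proof.
move=> ab BNE_y u; have [u_gt0 best] := symmetric_BNE_best_response ab BNE_y.
set m2 := \int[F]_(t in D) y t ^+ 2 in best; rewrite -/u in best.
have m1E : \int[F]_(t in D) y t = (c - M1 - a * m2) / (2 * u).
  rewrite (@eq_Rintegral _ _ _ F D (fun t => (c - a * m2) / (2 * u) + - (2 * u)^-1 * t)).
    by rewrite Rintegral_affine; ring.
  by move=> t; rewrite inE /= in_itv /= => /best ->; ring.
have m1_mean : (b - u) / a = \int[F]_(t in D) y t by rewrite /u; field.
have y_affine : {in D, y =1 affine_response u}.
  move=> t; rewrite inE /= in_itv /= => /best ->.
  by rewrite /affine_response m1_mean m1E; field; rewrite lt0r_neq0.
have m2E : m2 = ((b - u) / a) ^+ 2 + sigma2 / (2 * u) ^+ 2.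
  by rewrite -Rintegral_affine_response_sqr; apply: eq_Rintegral => t /y_affine ->.
split => // [|theta Dtheta]; last by apply: y_affine; rewrite inE /= in_itv.
by rewrite /self_best_response -m2E m1_mean m1E; field; rewrite lt0r_neq0.
Qed.

Lemma Rintegral_equilibrium :
  \int[F]_(t in D) affine_response equilibrium_curvature t =
  b / a - Num.sg a / Num.sqrt 2 * Num.sqrt (zeta + Num.sqrt (zeta ^+ 2 + omega)).
Proof.
have root_ge0 := ltW (quadratic_pos_root_gt0 zeta omega_gt0).
rewrite Rintegral_affine_response /equilibrium_curvature normrEsg.
rewrite sqrtrM ?sqrtrV //; last by lra.
by field; rewrite a_neq0 gt_eqF ?sqrtr_gt0.
Qed.

End affine_relaxation.

Theorem theorem3 (R : realType) (F : probability R R) (a b c alpha beta : R) :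
  a != 0 -> 0 < b -> 0 < c ->
  0 < alpha -> alpha <= beta -> beta < c ->
  measure_support F = [set` `[alpha, beta]] ->
  let M1 := Rintegral F [set` `[alpha, beta]] (fun t => t) in
  let M2 := Rintegral F [set` `[alpha, beta]] (fun t => t ^+ 2) in
  let Delta := c - M1 in
  let sigma2 := M2 - M1 ^+ 2 in
  0 < sigma2 ->
  let kappa := b / a in
  let omega := sigma2 / a ^+ 2 in
  let zeta := (b ^+ 2 - a * Delta) / a ^+ 2 in
  exists x : R -> R,
    [/\ symmetric_BNE F a b c alpha beta x,
        (forall y : R -> R, symmetric_BNE F a b c alpha beta y ->
           forall t, alpha <= t <= beta -> y t = x t),
        (exists p q : R, q < 0 /\ forall t, alpha <= t <= beta -> x t = p + q * t) &
        (\int[F]_(t in [set` `[alpha, beta]]) (x t)%:E)%E =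
          (kappa - Num.sg a / Num.sqrt 2 * Num.sqrt (zeta + Num.sqrt (zeta ^+ 2 + omega)))%:E].
Proof.
move=> a_neq0 _ _ _ _ _ supp M1 M2 Delta sigma2 var_gt0 kappa omega zeta.
have FD := probability_support_itv supp.
have u_gt0 := equilibrium_curvature_gt0 b c a_neq0 var_gt0.
set u := equilibrium_curvature F a b c alpha beta in u_gt0 *.
have fixed_u : self_best_response F a b c alpha beta u.
  exact/(self_best_responseP _ _ a_neq0 var_gt0 u_gt0).
exists (affine_response F a b alpha beta u); split.
- exact: affine_response_BNE.
- move=> y BNE_y; have ab := itv_lt_of_variance_gt0 FD var_gt0.
  have [v_gt0 fixed_v y_affine] := symmetric_BNE_affine_response FD a_neq0 ab BNE_y.
  move/(self_best_responseP b c a_neq0 var_gt0 v_gt0): fixed_v => v_eq.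
  by move=> t /y_affine; rewrite v_eq.
- exists ((b - u) / a + M1 / (2 * u)), (- (2 * u)^-1); split.
    by rewrite oppr_lt0 invr_gt0 mulr_gt0.
  by move=> t _; rewrite affine_responseE.
- have int_x : F.-integrable [set` `[alpha, beta]]
                 (EFin \o affine_response F a b alpha beta u).
    by rewrite affine_responseE; exact: integrable_affine.
  by rewrite (integral_EFin (measurable_itv _) int_x) Rintegral_equilibrium.
Qed.
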